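(* Over directed graphs, $\varphi_{\mathit{Lin}}(x)$ is expressible by an ACR-GNN. It can be achieved using only 3 layers and no aggregation over the out-neighbourhood.
   Context: A directed graph of dimension $d$ is $G=(V,E,\lambda)$ with finite node set $V$, loop-free edge set $E\subseteq V\times V$ and labelling $\lambda:V\to\{0,1\}^d$; $\overleftarrow{N}_G(v)$ and $\overrightarrow{N}_G(v)$ denote the in- and out-neighbourhoods of $v$. An ACR-GNN layer for directed graphs is a tuple $(\overleftarrow{\mathsf{agg}}, \overrightarrow{\mathsf{agg}}, \mathsf{comb}, \mathsf{read})$, where the aggregation and readout functions map multisets of vectors to vectors; applied to $G=(V,E,\lambda)$ it yields $G'=(V,E,\lambda')$ with $\lambda'(v)=\mathsf{comb}\big(\lambda(v), \overleftarrow{\mathsf{agg}}(\{\!\{\lambda(w)\}\!\}_{w\in\overleftarrow{N}_G(v)}), \overrightarrow{\mathsf{agg}}(\{\!\{\lambda(w)\}\!\}_{w\in\overrightarrow{N}_G(v)}), \mathsf{read}(\{\!\{\lambda(w)\}\!\}_{w\in V})\big)$, where $\{\!\{\cdot\}\!\}$ denotes a multiset. An ACR-GNN classifier consists of a fixed number of such layers followed by a classification function from vectors to truth values, giving a truth value for each node. $\varphi_{\mathit{Lin}}(x)$ is the node classifier accepting a node of a graph $G$ if and only if the edge relation of $G$ is a strict linear order. *)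

From HB Require Import structures.
From mathcomp Require Import all_boot all_order all_algebra.
Set Implicit Arguments. Unset Strict Implicit. Unset Printing Implicit Defensive.
Import Order.TTheory GRing.Theory Num.Theory.
Local Open Scope ring_scope.

Record digraph (d : nat) := Digraph {
  node : finType;
  edge : rel node;
  edge_loopfree : irreflexive edge;
  label : node -> 'I_d -> bool }.
Arguments node {d} _.
Arguments edge {d} _.
Arguments label {d} _.

Definition in_nbh d (G : digraph d) (v : node G) : {set node G} :=
  [set w | edge G w v].
Definition out_nbh d (G : digraph d) (v : node G) : {set node G} :=
  [set w | edge G v w].

(* Multisets of vectors, represented by their multiplicity function. *)
Definition mset (R : realFieldType) (m : nat) := 'rV[R]_m -> nat.

Definition mset_of (R : realFieldType) m (V : finType) (f : V -> 'rV[R]_m)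
  (A : {set V}) : mset R m :=
  fun x => #|[set w in A | f w == x]|.

Record layer (R : realFieldType) (m n : nat) := Layer {
  dim_in : nat; dim_out : nat; dim_read : nat;
  agg_in  : mset R m -> 'rV[R]_dim_in;
  agg_out : mset R m -> 'rV[R]_dim_out;
  comb    : 'rV[R]_m -> 'rV[R]_dim_in -> 'rV[R]_dim_out -> 'rV[R]_dim_read -> 'rV[R]_n;
  read    : mset R m -> 'rV[R]_dim_read }.
Arguments dim_in {R m n} _.
Arguments dim_out {R m n} _.
Arguments dim_read {R m n} _.
Arguments agg_in {R m n} _ _.
Arguments agg_out {R m n} _ _.
Arguments comb {R m n} _ _ _ _ _.
Arguments read {R m n} _ _.

Definition apply_layer (R : realFieldType) m n (L : layer R m n) d (G : digraph d)
  (f : node G -> 'rV[R]_m) : node G -> 'rV[R]_n :=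
  fun v => comb L (f v) (agg_in L (mset_of f (in_nbh v)))
                  (agg_out L (mset_of f (out_nbh v)))
                  (read L (mset_of f [set: node G])).

(* The layer does not aggregate over the out-neighbourhood: its
   out-aggregation function is constant. *)
Definition no_out_agg (R : realFieldType) m n (L : layer R m n) : Prop :=
  forall M1 M2 : mset R m, agg_out L M1 = agg_out L M2.

Inductive gnn (R : realFieldType) : nat -> nat -> Type :=
| GNil : forall n, gnn R n n
| GCons : forall m k n, layer R m k -> gnn R k n -> gnn R m n.

Fixpoint num_layers (R : realFieldType) m n (N : gnn R m n) : nat :=
  match N with GNil _ => 0%N | GCons _ _ _ _ N' => (num_layers N').+1 end.

Fixpoint all_no_out_agg (R : realFieldType) m n (N : gnn R m n) : Prop :=
  match N with GNil _ => True | GCons _ _ _ L N' => no_out_agg L /\ all_no_out_agg N' end.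

Fixpoint run_gnn (R : realFieldType) m n (N : gnn R m n) d (G : digraph d) :
  (node G -> 'rV[R]_m) -> node G -> 'rV[R]_n :=
  match N in gnn _ m n return (node G -> 'rV[R]_m) -> node G -> 'rV[R]_n with
  | GNil _ => fun f => f
  | GCons _ _ _ L N' => fun f => @run_gnn R _ _ N' d G (@apply_layer R _ _ L d G f)
  end.

Arguments run_gnn {R m n} _ {d} _ _ _.
Arguments apply_layer {R m n} _ {d} _ _ _.

Definition init_feat (R : realFieldType) d (G : digraph d) (v : node G) : 'rV[R]_d :=
  \row_i (label G v i)%:R.

Record classifier (R : realFieldType) (d : nat) := Classifier {
  out_dim : nat;
  layers : gnn R d out_dim;
  cls : 'rV[R]_out_dim -> bool }.
Arguments out_dim {R d} _.
Arguments layers {R d} _.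
Arguments cls {R d} _ _.

Definition classify (R : realFieldType) d (C : classifier R d) (G : digraph d)
  (v : node G) : bool :=
  cls C (run_gnn (layers C) G (@init_feat R d G) v).

Definition strict_linear_order (V : finType) (E : rel V) : Prop :=
  irreflexive E /\ transitive E /\ (forall x y, x != y -> E x y || E y x).

Definition phi_Lin d (G : digraph d) (v : node G) : Prop :=
  strict_linear_order (edge G).

Arguments classify {R d} _ _ _.
Arguments phi_Lin {d} _ _.
Arguments init_feat {R d} _ _.
Arguments num_layers {R m n} _.
Arguments all_no_out_agg {R m n} _.

From mathcomp Require Import all_boot all_algebra.
From mathcomp Require Import boolp.
Set Implicit Arguments. Unset Strict Implicit. Unset Printing Implicit Defensive.

(* A finite relation E is a strict linear order iff the in-degree map is
   injective and, for every node v, the in-degrees of the in-neighbours of v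
   are 0, 1, ..., k-1 for some k; then k = indeg v, since v has k
   in-neighbours, and E x y holds iff indeg x < indeg y.  Both conditions are
   visible to an ACR-GNN: a first layer computes in-degrees, a second tests the
   local condition by in-aggregation and injectivity by readout, and a third
   accepts by readout iff every node passed. *)
Import Num.Theory.

Section StrictLinearOrder.
Variables (V : finType) (E : rel V).

Definition indeg (v : V) : nat := #|[set u | E u v]|.

Definition in_indegs (v : V) : seq nat := [seq indeg u | u in [set u | E u v]].

Lemma inj_ltn_strict_linear_order (f : V -> nat) :
  injective f -> E =2 (fun x y => f x < f y) -> strict_linear_order E.
Proof.
move=> f_inj Ef; split; [|split].
- by move=> x; rewrite Ef ltnn.
- by move=> y x z; rewrite !Ef; apply: ltn_trans.
- move=> x y; rewrite !Ef -neq_ltn; exact: contra_neq (@f_inj x y).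
Qed.

Lemma indeg_lt x y :
  irreflexive E -> transitive E -> E x y -> indeg x < indeg y.
Proof.
move=> irrE trE Exy; apply/proper_card/properP; split.
  by apply/subsetP => w; rewrite !inE => Ewx; exact: trE Ewx Exy.
by exists x; rewrite !inE ?irrE.
Qed.

Lemma indeg_inj : strict_linear_order E -> injective indeg.
Proof.
move=> [irrE [trE totE]] x y eq_xy; apply/eqP/negPn/negP => /totE.
by case/orP => /(indeg_lt irrE trE); rewrite eq_xy ltnn.
Qed.

Lemma in_indegs_perm_iota v :
  strict_linear_order E -> perm_eq (in_indegs v) (iota 0 (indeg v)).
Proof.
move=> linE; have [irrE [trE _]] := linE.
have uniq_indegs : uniq (in_indegs v).
  by rewrite map_inj_uniq ?enum_uniq //; exact: indeg_inj.
have sub_iota : {subset in_indegs v <= iota 0 (indeg v)}.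
  by move=> c /imageP[u]; rewrite inE mem_iota add0n => Euv ->; exact: indeg_lt.
have le_size : size (iota 0 (indeg v)) <= size (in_indegs v).
  by rewrite size_iota size_image.
have [_ eq_mem] := uniq_min_size uniq_indegs sub_iota le_size.
by rewrite uniq_perm ?iota_uniq.
Qed.

Lemma strict_linear_order_indeg :
  strict_linear_order E <->
  injective indeg /\ forall v, exists k, perm_eq (in_indegs v) (iota 0 k).
Proof.
split=> [linE | [inj_indeg segE]].
  by split=> [|v]; [exact: indeg_inj | exists (indeg v); exact: in_indegs_perm_iota].
apply: (inj_ltn_strict_linear_order inj_indeg) => x y.
have [k perm_k] := segE y.
have k_indeg : k = indeg y by rewrite -(size_iota 0 k) -(perm_size perm_k) size_image.
have mem_indegs c : (c \in in_indegs y) = (c < indeg y).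
  by rewrite (perm_mem perm_k) mem_iota k_indeg.
apply/idP/idP => [Exy | ].
  by rewrite -mem_indegs; apply/imageP; exists x; rewrite ?inE.
by rewrite -mem_indegs => /imageP[u]; rewrite inE => Euy /inj_indeg ->.
Qed.

End StrictLinearOrder.

Section Multisets.
Variable R : realFieldType.
Local Open Scope ring_scope.

Definition mset_seq m (s : seq 'rV[R]_m) : mset R m := fun x => count_mem x s.

Lemma mset_ofE m (V : finType) (f : V -> 'rV[R]_m) (A : {set V}) :
  mset_of f A =1 mset_seq [seq f w | w in A].
Proof.
move=> x; rewrite /mset_of /mset_seq cardE /enum_mem size_filter count_map.
by rewrite count_filter; apply: eq_count => w; rewrite !inE andbC.
Qed.

Lemma mset_of_le1P m (V : finType) (f : V -> 'rV[R]_m) :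
  (forall x, (mset_of f [set: V] x <= 1)%N) <-> injective f.
Proof.
rewrite /mset_of; split=> [le1 u w eq_f | inj_f x].
  by move/card_le1_eqP: (le1 (f u)) => /(_ w u); rewrite !inE eq_f eqxx; exact.
apply/card_le1_eqP; move=> u w; rewrite !inE => /eqP <- /eqP; exact: inj_f.
Qed.

Definition enc (n : nat) : 'rV[R]_1 := const_mx n%:R.

Lemma enc_inj : injective enc.
Proof.
move=> a b /(congr1 (fun M : 'rV[R]_1 => M 0 0)); rewrite !mxE.
by move/eqP; rewrite eqr_nat => /eqP.
Qed.

Lemma enc_eq1 (b : bool) : (enc b == enc 1) = b.
Proof. by rewrite (inj_eq enc_inj); case: b. Qed.

Lemma enc_eq0 (b : bool) : (enc b == enc 0) = ~~ b.
Proof. by rewrite (inj_eq enc_inj); case: b. Qed.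

Lemma mset_of_enc_eq0 (V : finType) (b : V -> bool) :
  (mset_of (fun w => enc (b w)) [set: V] (enc 0) == 0)%N = [forall w, b w].
Proof.
apply/eqP/forallP => [/cards0_eq/setP no_reject w | accept].
  by move: (no_reject w); rewrite !inE enc_eq0 => /negbFE.
by apply/eqP; rewrite cards_eq0; apply/eqP/setP => w; rewrite !inE enc_eq0 accept.
Qed.

Definition is_segment (M : mset R 1) : Prop :=
  exists k, M =1 mset_seq [seq enc c | c <- iota 0 k].

Lemma is_segmentP (M : mset R 1) (s : seq nat) :
  M =1 mset_seq [seq enc c | c <- s] ->
  is_segment M <-> exists k, perm_eq s (iota 0 k).
Proof.
move=> eqM; split=> [[k Mk] | [k /(perm_map enc) /permP perm_k]]; exists k.
  apply: (perm_map_inj enc_inj); rewrite /perm_eq; apply/allP => x _.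
  by apply/eqP; rewrite -[LHS]/(mset_seq _ x) -eqM Mk.
by move=> x; rewrite eqM; exact: perm_k.
Qed.

Definition row01 m (b : {ffun 'I_m -> bool}) : 'rV[R]_m := \row_i (b i)%:R.

Lemma row01_inj m : injective (@row01 m).
Proof.
move=> a b eq_ab; apply/ffunP => i.
move/(congr1 (fun M : 'rV[R]_m => M 0 i)): eq_ab; rewrite !mxE.
by move/eqP; rewrite eqr_nat; case: (a i); case: (b i).
Qed.

(* Initial features are {0,1}-vectors, so these multiplicities add up to the
   size of a multiset of initial features. *)
Definition card01 m (M : mset R m) : nat :=
  (\sum_(b : {ffun 'I_m -> bool}) M (row01 b))%N.

Lemma eq_card01 m (M M' : mset R m) : M =1 M' -> card01 M = card01 M'.
Proof. by move=> eqM; apply: eq_bigr => b _; rewrite eqM. Qed.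

Lemma card01_mset_seq m (t : seq {ffun 'I_m -> bool}) :
  card01 (mset_seq (map (@row01 m) t)) = size t.
Proof.
elim: t => [|a t IHt]; first by rewrite /card01 big1.
have count_a : (\sum_b (row01 a == row01 b) = 1)%N.
  rewrite (bigD1 a) //= eqxx big1 // => b.
  by rewrite eq_sym (inj_eq (@row01_inj m)) => /negbTE ->.
by rewrite /card01 /mset_seq /= big_split /= count_a add1n -IHt.
Qed.

Lemma card01_init d (G : digraph d) (A : {set node G}) :
  card01 (mset_of (init_feat (R:=R) G) A) = #|A|.
Proof.
pose bits (w : node G) := [ffun i => label G w i].
have init_bits w : init_feat G w = row01 (bits w).
  by apply/rowP => i; rewrite !mxE ffunE.
rewrite (eq_card01 (mset_ofE _ _)) /image_mem (eq_map init_bits) map_comp.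
by rewrite card01_mset_seq size_map cardE.
Qed.
End Multisets.

Section LinearOrderGNN.
Variables (R : realFieldType) (d : nat).
Local Open Scope ring_scope.

Definition in_degree_layer : layer R d 1 :=
  @Layer R d 1 1 0 0 (fun M => enc R (card01 M)) (fun _ => 0) (fun _ a _ _ => a)
    (fun _ => 0).

Definition segment_layer : layer R 1 1 :=
  @Layer R 1 1 1 0 1 (fun M => enc R `[< is_segment M >]) (fun _ => 0)
    (fun _ a _ r => enc R ((a == enc R 1) && (r == enc R 1)))
    (fun M => enc R `[< forall x, (M x <= 1)%N >]).

Definition accept_layer : layer R 1 1 :=
  @Layer R 1 1 0 0 1 (fun _ => 0) (fun _ => 0) (fun _ _ _ r => r)
    (fun M => enc R (M (enc R 0) == 0%N)).

Definition lin_classifier : classifier R d :=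
  @Classifier R d 1
    (GCons in_degree_layer (GCons segment_layer (GCons accept_layer (GNil R 1))))
    (fun x => x == enc R 1).

Lemma in_degree_layerE (G : digraph d) :
  apply_layer in_degree_layer G (init_feat G) = enc R \o indeg (edge G).
Proof. by apply/funext => v; rewrite /apply_layer /= card01_init. Qed.

Lemma segment_layerE (G : digraph d) (f : node G -> 'rV[R]_1) :
  apply_layer segment_layer G f =
  (fun w => enc R (`[< is_segment (mset_of f (in_nbh w)) >] &&
                   `[< forall x, (mset_of f [set: node G] x <= 1)%N >])).
Proof. by apply/funext => w; rewrite /apply_layer /= !enc_eq1. Qed.

Lemma lin_classifierP (G : digraph d) (v : node G) :
  classify lin_classifier G v <-> strict_linear_order (edge G).
Proof.
rewrite /classify /= in_degree_layerE segment_layerE mset_of_enc_eq0 enc_eq1.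
rewrite strict_linear_order_indeg.
have in_nbhE w : mset_of (enc R \o indeg (edge G)) (in_nbh w) =1
                 mset_seq [seq enc R c | c <- in_indegs (edge G) w].
  by move=> x; rewrite mset_ofE /in_indegs /image_mem -map_comp.
split=> [/forallP accept | [inj_indeg segments]].
  have /andP[_ /asboolP distinct] := accept v.
  split=> [| w]; first exact/(inj_compr (f:=enc R))/mset_of_le1P.
  by have /andP[/asboolP seg _] := accept w; apply/(is_segmentP (in_nbhE w)).
apply/forallP => w; apply/andP; split; apply/asboolP.
  exact/(is_segmentP (in_nbhE w)).
by apply/mset_of_le1P/inj_comp => //; exact: enc_inj.
Qed.

End LinearOrderGNN.

Theorem theorem2 :
  forall (R : realFieldType) (d : nat),
  exists C : classifier R d,
    num_layers (layers C) = 3%N /\ all_no_out_agg (layers C) /\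
    forall (G : digraph d) (v : node G), classify C G v <-> phi_Lin G v.
Proof.
move=> R d; exists (lin_classifier R d); split; first by [].
split; last exact: lin_classifierP.
by do !split.
Qed.
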